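(* In Setting (S), for each $0\le i\le \ell-1$, the vertex set of the slice $S_i$, namely $V(G_i)\setminus V(G_{i+1})=H'_{i+1}\setminus(H_1'\cup\cdots\cup H_i')$, is gated in $G$.
   Context: Graphs are finite, simple, connected, undirected; $d$ is shortest-path distance; $I(u,v)=\{x:d(u,x)+d(x,v)=d(u,v)\}$; a graph is median if every triple $x,y,z$ has $|I(x,y)\cap I(y,z)\cap I(z,x)|=1$. A vertex set $H$ is gated if each vertex $v$ has a vertex $g_H(v)\in H$ with $g_H(v)\in I(v,x)$ for all $x\in H$. $\Theta$-classes: classes of the reflexive–transitive closure of the relation on edges ''$uv$ and $xy$ are opposite edges of a 4-cycle''. Deleting a $\Theta$-class $E_i$ of a median graph leaves two components with vertex sets (halfspaces) $H_i',H_i''$. For $u\ne v$, the ladder set $L_{u,v}$ is the set of $\Theta$-classes separating $u$ from $v$ that contain an edge incident to $u$. Setting (S): $(G,\omega)$ is a median graph with $n\ge 3$ vertices and weights $\omega:V(G)\to\mathbb{N}$ such that every $\Theta$-class satisfies $\min\{|H_i'|,|H_i''|\}<n/(2\log n)$ ($\log$ natural); $H_i'$ denotes the smaller (minority) and $H_i''$ the larger (majority) halfspace. $v_0$ is the unique vertex in all majority halfspaces; $u_{\max}$ maximizes $d(v_0,u)+\omega(u)$ (chosen $=v_0$ if possible) and $u_{\max}\ne v_0$ is assumed. $L(G)=L_{v_0,u_{\max}}=\{E_1,\dots,E_\ell\}$. Large sets: $G_0=G$, $G_{i+1}=G[V(G_i)\setminus H'_{i+1}]$. Slices: $S_i=G[V(G_i)\setminus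 V(G_{i+1})]$ for $0\le i\le\ell-1$. *)

From Stdlib Require Import Reals.
From mathcomp Require Import all_boot.
Set Implicit Arguments.
Unset Strict Implicit.
Unset Printing Implicit Defensive.

Section Graphs.
Variables (T : finType) (e : rel T).

Definition simple_graph : Prop := symmetric e /\ irreflexive e.
Definition connected_graph : Prop := forall u v : T, connect e u v.

Definition walkb (n : nat) (u v : T) : bool :=
  [exists p : n.-tuple T, path e u p && (last u p == v)].

(* shortest-path distance (in a connected graph a shortest walk has length < #|T|) *)
Definition gdist (u v : T) : nat := find (fun n => walkb n u v) (iota 0 #|T|).

Definition interval (u v : T) : {set T} :=
  [set x | gdist u x + gdist x v == gdist u v].

Definition median_graph : Prop :=
  forall x y z : T, #|interval x y :&: interval y z :&: interval z x| = 1.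

Definition gated (H : {set T}) : Prop :=
  forall v : T, exists2 g, g \in H & forall x, x \in H -> g \in interval v x.

Definition is_edge (F : {set T}) : bool :=
  [exists u, exists v, e u v && (F == [set u; v])].

(* E = uv and F = xy are opposite edges of the 4-cycle u-v-y-x-u *)
Definition opp4 (E F : {set T}) : bool :=
  [exists u, exists v, exists x, exists y,
    [&& e u v, e v y, e y x, e x u, u != y, v != x,
        E == [set u; v] & F == [set x; y]]].

Definition theta_of (E : {set T}) : {set {set T}} :=
  [set F | is_edge F & connect opp4 E F].

Definition theta_class (C : {set {set T}}) : bool :=
  [exists E, is_edge E && (C == theta_of E)].

Definition comp (C : {set {set T}}) (x : T) : {set T} :=
  [set y | connect (fun a b => e a b && ([set a; b] \notin C)) x y].

Definition halfspaces (C : {set {set T}}) : {set {set T}} :=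
  [set comp C x | x in T].

Definition ladder (u v : T) (C : {set {set T}}) : bool :=
  [&& theta_class C, v \notin comp C u & [exists y, e u y && ([set u; y] \in C)]].

(* vertex sets of the large sets G_i, for an enumeration Ls = [E_1; ...; E_l]
   and minority-halfspace map Hm:  V(G_0) = V, V(G_{i+1}) = V(G_i) \ H'_{i+1} *)
Fixpoint large_set (Hm : {set {set T}} -> {set T}) (Ls : seq {set {set T}}) (i : nat)
  : {set T} :=
  match i with
  | 0 => setT
  | i'.+1 => large_set Hm Ls i' :\: Hm (nth set0 Ls i')
  end.

Definition slice Hm Ls (i : nat) : {set T} :=
  large_set Hm Ls i :\: large_set Hm Ls i.+1.

End Graphs.

(* In a median graph the Theta-class of an edge uv consists exactly of the edges
   with one end in W_uv = {w | d(w,u) < d(w,v)} and the other outside it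
   (Djokovic-Winkler): in a square with one crossing edge the opposite edge
   crosses too, since otherwise the median of its far ends would produce a
   K_{2,3}; conversely a crossing edge is joined to uv by a ladder of squares
   built from medians.  Hence the halfspaces of the class are W_uv and W_vu, and
   both are convex.  The minority halfspace H'_j of each ladder class is the one
   avoiding v0, so a slice is an intersection of convex sets.  It is nonempty:
   the neighbour y of v0 across E_{i+1} lies in H'_{i+1} but in no earlier H'_j,
   as v0y would otherwise belong to E_j as well.  Finally a nonempty convex set
   is gated, with gate a nearest point: the median of v, that point and any x of
   the set lies in the set, so it is the point itself. *)

From Pilot Require Import Defs.
From Stdlib Require Import Reals.
From mathcomp Require Import all_boot zify.
Set Implicit Arguments.
Unset Strict Implicit.
Unset Printing Implicit Defensive.

Section MedianGraph.
Variables (T : finType) (e : rel T).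
Hypotheses (Hsym : symmetric e) (Hirr : irreflexive e) (Hconn : connected_graph e).
Local Notation d := (gdist e).

Lemma walkbP n u v :
  reflect (exists p, [/\ size p = n, path e u p & last u p = v]) (walkb e n u v).
Proof.
apply: (iffP existsP) => [[p /andP[hp /eqP hl]] | [p [hs hp hl]]].
  by exists (val p); rewrite size_tuple.
by exists (Tuple (introT eqP hs)); rewrite /= hp hl eqxx.
Qed.

Lemma walkb_short u v : exists2 n, n < #|T| & walkb e n u v.
Proof.
have /connectP [p hp hl] := Hconn u v.
case: (shortenP hp) hl => p' hp' hu _ hl.
exists (size p'); last by apply/walkbP; exists p'.
by apply: leq_trans (max_card (mem (u :: p'))); rewrite (card_uniqP hu).
Qed.

Lemma gdist_walk u v :
  exists p, [/\ size p = d u v, path e u p & last u p = v].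
Proof.
apply/walkbP; have [n hn hw] := walkb_short u v.
have hh : has (fun n => walkb e n u v) (iota 0 #|T|).
  by apply/hasP; exists n; rewrite ?mem_iota.
have := nth_find 0 hh; rewrite has_find size_iota in hh.
by rewrite nth_iota // add0n.
Qed.

Lemma gdist_le k u v : walkb e k u v -> d u v <= k.
Proof.
move=> hw; case: (ltnP k #|T|) => hk; last first.
  by apply: leq_trans hk; rewrite -[X in _ <= X](size_iota 0) find_size.
rewrite leqNgt; apply/negP => /(before_find 0).
by rewrite nth_iota // add0n hw.
Qed.

Lemma gdistxx u : d u u = 0.
Proof. by apply/eqP; rewrite -leqn0; apply: gdist_le; apply/walkbP; exists [::]. Qed.

Lemma gdist0_eq u v : d u v = 0 -> u = v.
Proof. by have [[|x p] [<- _ hl]] := gdist_walk u v. Qed.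

Lemma gdist_triangle u v w : d u w <= d u v + d v w.
Proof.
have [p [hs hp hl]] := gdist_walk u v; have [q [hs' hq hl']] := gdist_walk v w.
apply: gdist_le; apply/walkbP; exists (p ++ q).
by rewrite size_cat cat_path last_cat hs hs' hp hl hq hl'.
Qed.

Lemma gdistC u v : d u v = d v u.
Proof.
suff le_d a b : d b a <= d a b by apply/eqP; rewrite eqn_leq !le_d.
have [p [hs hp hl]] := gdist_walk a b.
apply: gdist_le; apply/walkbP; exists (rev (belast a p)); split.
- by rewrite size_rev size_belast.
- by rewrite -hl rev_path; apply: sub_path hp => x y /=; rewrite Hsym.
- by rewrite -hl; case/lastP: p {hs hp hl} => // p x;
    rewrite belast_rcons last_rcons rev_cons last_rcons.
Qed.

Lemma gdist1_edge u v : d u v = 1 -> e u v.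
Proof.
move=> h1; have [p [hs hp hl]] := gdist_walk u v; rewrite h1 in hs.
by case: p hs hp hl => [|x [|]] //= _; rewrite andbT => hux <-.
Qed.

Lemma edge_gdist1 u v : e u v -> d u v = 1.
Proof.
move=> huv; apply/eqP; rewrite eqn_leq lt0n; apply/andP; split.
  by apply: gdist_le; apply/walkbP; exists [:: v]; rewrite /= huv.
by apply/eqP => /gdist0_eq huu; rewrite huu Hirr in huv.
Qed.

Lemma gdist_edge_le u v x : e u v -> d u x <= (d v x).+1.
Proof. by move=> /edge_gdist1 huv; have := gdist_triangle u v x; rewrite huv. Qed.

Lemma gdist_step u v : 0 < d u v -> exists2 w, e u w & d w v = (d u v).-1.
Proof.
have [[|w p] [hs hp hl]] := gdist_walk u v; first by rewrite -hs.
move: hp => /= /andP [huw hp] _; exists w => //.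
have h1 : d w v <= size p by apply: gdist_le; apply/walkbP; exists p.
have := gdist_triangle u w v; rewrite (edge_gdist1 huw) -hs /= in h1 *.
lia.
Qed.

Hypothesis Hmed : median_graph e.

Definition is_median x y z m :=
  [/\ d x m + d m y = d x y, d y m + d m z = d y z & d z m + d m x = d z x].

Lemma is_median_interval x y z m :
  is_median x y z m <-> m \in interval e x y :&: interval e y z :&: interval e z x.
Proof.
by rewrite !inE; split=> [[-> -> ->] | /andP [/andP [/eqP ? /eqP ?] /eqP ?]];
  rewrite ?eqxx.
Qed.

Lemma median_set1 x y z :
  exists m, interval e x y :&: interval e y z :&: interval e z x = [set m].
Proof. by apply/cards1P; rewrite Hmed. Qed.

Lemma median_exists x y z : exists m, is_median x y z m.
Proof.
have [m hm] := median_set1 x y z.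
by exists m; apply/is_median_interval; rewrite hm set11.
Qed.

Lemma median_unique x y z m1 m2 :
  is_median x y z m1 -> is_median x y z m2 -> m1 = m2.
Proof.
have [m hm] := median_set1 x y z.
by move=> /is_median_interval + /is_median_interval; rewrite hm !inE => /eqP -> /eqP.
Qed.

Lemma gdist_sum1 a b m : d a m + d m b = 1 -> m = a \/ m = b.
Proof.
move=> h; have [/gdist0_eq -> | ham] := eqVneq (d a m) 0; first by left.
by right; apply: gdist0_eq; lia.
Qed.

Lemma gdist_edge_parity u v w :
  e u v -> d w v = (d w u).+1 \/ d w u = (d w v).+1.
Proof.
move=> huv; have [m [h1 h2 h3]] := median_exists u v w.
have duv := edge_gdist1 huv; have dvu := gdistC v u; rewrite duv in h1.
case: (gdist_sum1 h1) => Em; subst m;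
  rewrite (gdistC w u) (gdistC w v) in h2 h3 *; lia.
Qed.

Lemma triangle_free a b c : e a b -> e b c -> e c a -> False.
Proof.
move=> hab hbc hca; have [m [h1 h2 h3]] := median_exists a b c.
rewrite (edge_gdist1 hab) in h1; rewrite (edge_gdist1 hbc) in h2.
rewrite (edge_gdist1 hca) in h3.
have neq x y : e x y -> x <> y by move=> hxy hxy'; rewrite hxy' Hirr in hxy.
have := neq _ _ hab; have := neq _ _ hbc; have := neq _ _ hca.
by case: (gdist_sum1 h1); case: (gdist_sum1 h2); case: (gdist_sum1 h3); congruence.
Qed.

Lemma gdist_common_neighbour a b c : e a c -> e c b -> a != b -> d a b = 2.
Proof.
move=> hac hcb hab.
have := gdist_triangle a c b; rewrite (edge_gdist1 hac) (edge_gdist1 hcb).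
case E: (d a b) => [|[|[|k]]] // _.
  by move/gdist0_eq: E hab => ->; rewrite eqxx.
by case: (triangle_free hac hcb); rewrite Hsym gdist1_edge.
Qed.

Lemma no_K23 a y b x m :
  a != y -> e a b -> e b y -> e a x -> e x y -> e a m -> e m y ->
  b != x -> x != m -> b != m -> False.
Proof.
move=> nay hab hby hax hxy ham hmy nbx nxm nbm.
have [hba hxa hma] : [/\ e b a, e x a & e m a] by rewrite !(Hsym _ a).
have hbx : d b x = 2 := gdist_common_neighbour hba hax nbx.
have hxm : d x m = 2 := gdist_common_neighbour hxa ham nxm.
have hmb : d m b = 2 by apply: gdist_common_neighbour hma hab _; rewrite eq_sym.
have M1 : is_median b x m a.
  by split; rewrite !(gdistC _ a) ?(edge_gdist1 hab) ?(edge_gdist1 hax)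
    ?(edge_gdist1 ham) ?hbx ?hxm ?hmb.
have M2 : is_median b x m y.
  by split; rewrite !(gdistC y) ?(edge_gdist1 hby) ?(edge_gdist1 hxy)
    ?(edge_gdist1 hmy) ?hbx ?hxm ?hmb.
by move: nay; rewrite (median_unique M1 M2) eqxx.
Qed.

Definition closer u v w := d w u < d w v.

Lemma closer_swap u v w : e u v -> closer v u w = ~~ closer u v w.
Proof.
by move=> huv; rewrite /closer; case: (gdist_edge_parity w huv) => ->;
  rewrite ?ltnSn ltnNge ?leqnSn ?ltnW.
Qed.

Lemma closer_edge u v : e u v -> closer u v u /\ ~~ closer u v v.
Proof. by move=> huv; rewrite /closer !gdistxx (edge_gdist1 huv); split. Qed.

Lemma closer_gdist u v w : e u v -> closer u v w -> d w v = (d w u).+1.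
Proof.
by move=> huv; rewrite /closer; case: (gdist_edge_parity w huv) => -> //;
  rewrite ltnNge leqnSn.
Qed.

Lemma gdist_across u v a b : e u v -> e a b -> closer u v a -> ~~ closer u v b ->
  [/\ d a v = (d a u).+1, d b u = (d a u).+1 & d b v = d a u].
Proof.
move=> huv hab sa sb; have hba : e b a by rewrite Hsym.
have hav := closer_gdist huv sa.
have hvu : e v u by rewrite Hsym.
have hbu : d b u = (d b v).+1 by apply: (closer_gdist hvu); rewrite closer_swap.
have := gdist_edge_le u hab; have := gdist_edge_le u hba.
have := gdist_edge_le v hab; have := gdist_edge_le v hba.
by move: hav hbu; clear; split; lia.
Qed.

Lemma median_common_neighbour a y u : d a y = 2 -> d a u = d y u ->
  exists m, [/\ e a m, e m y & (d m u).+1 = d a u].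
Proof.
move=> hay hu; have [m [m1 m2 m3]] := median_exists a y u.
rewrite hay -hu (gdistC u m) (gdistC m a) (gdistC u a) (gdistC m y) in m1 m2 m3.
exists m; split; [apply: gdist1_edge | rewrite Hsym; apply: gdist1_edge |];
  by clear -m1 m2 m3; lia.
Qed.

Lemma square_across_closer u v a b x y :
  e u v -> e a b -> e b y -> e y x -> e x a -> a != y -> b != x ->
  closer u v a -> ~~ closer u v b -> ~~ (closer u v x && closer u v y).
Proof.
move=> huv hab hby hyx hxa nay nbx sa sb; apply/negP => /andP [sx sy].
have [hba hyb hax] : [/\ e b a, e y b & e a x] by split; rewrite Hsym.
have [hav hbu hbv] := gdist_across huv hab sa sb.
have [hyv hbu' hbv'] := gdist_across huv hyb sy sb.
have hyu : d a u = d y u by rewrite -hbv -hbv'.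
have [m [eam emy hmu]] :=
  median_common_neighbour (gdist_common_neighbour hab hby nay) hyu.
have nbm : b != m by apply/eqP => Ebm; move: hmu; rewrite -Ebm hbu; clear; lia.
have [Exm | nxm] := eqVneq x m; last first.
  by apply: (no_K23 nay hab hby hax _ eam emy nbx nxm nbm); rewrite Hsym.
subst x; have hmv := closer_gdist huv sx.
have hbm : d b m = 2 := gdist_common_neighbour hba eam nbm.
have [w [ebw ewm hwv]] := median_common_neighbour hbm (etrans hbv (esym (etrans hmv hmu))).
have nyw : y != w by apply/eqP => Eyw; move: hwv; rewrite -Eyw hyv -hyu hbv; clear; lia.
have naw : a != w by apply/eqP => Eaw; move: hwv; rewrite -Eaw hav hbv; clear; lia.
by apply: (no_K23 nbm hba _ hby hyx ebw ewm nay nyw naw); rewrite Hsym.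
Qed.

Lemma square_crossing u v a b x y :
  e u v -> e a b -> e b y -> e y x -> e x a -> a != y -> b != x ->
  closer u v a != closer u v b -> closer u v x != closer u v y.
Proof.
move=> huv; wlog sa : a b x y / closer u v a.
  move=> W hab hby hyx hxa nay nbx cab.
  have [sa | sa] := boolP (closer u v a); first exact: W sa hab hby hyx hxa nay nbx cab.
  have [hba hax hxy hyb] : [/\ e b a, e a x, e x y & e y b] by split; rewrite Hsym.
  rewrite eq_sym; apply: (W b a y x) => //; last by rewrite eq_sym.
  by move: cab; rewrite (negbTE sa); case: (closer u v b).
move=> hab hby hyx hxa nay nbx; rewrite sa /= => sb.
have [hba hax hxy hyb] : [/\ e b a, e a x, e x y & e y b] by split; rewrite Hsym.
have hvu : e v u by rewrite Hsym.
have := square_across_closer huv hab hby hyx hxa nay nbx sa sb.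
have := square_across_closer hvu hba hax hxy hyb nbx nay.
rewrite !(closer_swap _ huv) sa sb => /(_ isT isT).
by case: (closer u v x); case: (closer u v y).
Qed.

Definition crossing u v (F : {set T}) :=
  forall a b, F = [set a; b] -> e a b -> closer u v a != closer u v b.

Lemma crossing2 u v x y :
  closer u v x != closer u v y -> crossing u v [set x; y].
Proof.
move=> cross_xy a b hF hab.
have [ha hb] : a \in [set x; y] /\ b \in [set x; y] by rewrite hF !inE !eqxx orbT.
have : a != b by apply: contraTneq hab => ->; rewrite Hirr.
move: ha hb; rewrite !inE => /orP [] /eqP -> /orP [] /eqP ->; rewrite ?eqxx // => _.
by rewrite eq_sym.
Qed.

Lemma opp4_crossing u v E F :
  e u v -> opp4 e E F -> crossing u v E -> crossing u v F.
Proof.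
move=> huv /existsP [a /existsP [b /existsP [x /existsP [y H]]]].
move: H => /and4P [hab hby hyx /and5P [hxa nay nbx /eqP -> /eqP ->]] crossE.
exact/crossing2/(square_crossing huv hab hby hyx hxa nay nbx)/crossE.
Qed.

Lemma theta_crossing u v F :
  e u v -> connect (opp4 e) [set u; v] F -> crossing u v F.
Proof.
move=> huv /connectP [p hp ->] {F}.
have cross_uv : crossing u v [set u; v].
  by apply: crossing2; case: (closer_edge huv) => -> ->.
elim: p [set u; v] cross_uv hp => [|F p IH] E crossE //= /andP [hEF hp].
exact: IH (opp4_crossing huv hEF crossE) hp.
Qed.

Lemma opp4_square a b c d :
  e a b -> e b d -> e d c -> e c a -> a != d -> b != c ->
  opp4 e [set a; b] [set c; d].
Proof.
move=> hab hbd hdc hca nad nbc.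
apply/existsP; exists a; apply/existsP; exists b; apply/existsP; exists c.
by apply/existsP; exists d; rewrite hab hbd hdc hca nad nbc !eqxx.
Qed.

Lemma crossing_edge_theta u v a b :
  e u v -> e a b -> closer u v a -> ~~ closer u v b ->
  connect (opp4 e) [set u; v] [set a; b].
Proof.
move=> huv; move hp : (d a u) => p.
elim: p a b hp => [|p IH] a b hp eab sa sb.
  move/gdist0_eq: hp => Ea; subst a.
  have [_ _] := gdist_across huv eab sa sb; rewrite gdistxx.
  by move=> /gdist0_eq <-.
have [hav hbu hbv] := gdist_across huv eab sa sb; rewrite hp in hav hbu hbv.
have := @gdist_step a u; rewrite hp => /(_ isT) [a' eaa' /= ha'].
have [ea'a eba] : e a' a /\ e b a by split; rewrite Hsym.
have ha'v : d a' v = p.+1.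
  have := gdist_edge_parity a' huv; have := gdist_edge_le v eaa'.
  by move: ha' hav; clear; lia.
have na'b : a' != b by apply/eqP => Ea'b; move: ha'; rewrite Ea'b hbu; clear; lia.
have [b' [ea'b' eb'b]] :=
  median_common_neighbour (gdist_common_neighbour ea'a eab na'b) (etrans ha'v (esym hbv)).
rewrite ha'v => /succn_inj hb'v.
have hb'u : d b' u = p.+1.
  have ebb' : e b b' by rewrite Hsym.
  have := gdist_edge_parity b' huv; have := gdist_edge_le u ebb'.
  by move: hb'v hbu; clear; lia.
have nb'a : b' != a by apply/eqP => Eb'a; move: hb'v; rewrite Eb'a hav; clear; lia.
apply: connect_trans (IH a' b' ha' ea'b' _ _) (connect1 _).
- by rewrite /closer ha'v ha'.
- by rewrite /closer hb'u hb'v -leqNgt leqnSn.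
by apply: opp4_square; rewrite // Hsym.
Qed.

Lemma mem_theta_of u v a b : e u v -> e a b ->
  ([set a; b] \in theta_of e [set u; v]) = (closer u v a != closer u v b).
Proof.
move=> huv eab; rewrite inE.
have -> : is_edge e [set a; b].
  by apply/existsP; exists a; apply/existsP; exists b; rewrite eab eqxx.
rewrite /=; apply/idP/idP; first by move=> /(theta_crossing huv); apply.
case sa: (closer u v a); case sb: (closer u v b) => // _.
  by apply: crossing_edge_theta huv eab _ _; rewrite ?sa ?sb.
have eba : e b a by rewrite Hsym.
by rewrite [[set a; b]]setUC; apply: crossing_edge_theta huv eba _ _; rewrite ?sa ?sb.
Qed.

Definition cut_rel (C : {set {set T}}) : rel T :=
  fun a b => e a b && ([set a; b] \notin C).

Lemma cut_rel_sym C : symmetric (cut_rel C).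
Proof. by move=> a b; rewrite /cut_rel Hsym setUC. Qed.

Lemma closer_connect_cut u v z :
  e u v -> closer u v z -> connect (cut_rel (theta_of e [set u; v])) z u.
Proof.
move=> huv; move hz : (d z u) => n; elim: n z hz => [|n IH] z hz sz.
  by rewrite (gdist0_eq hz).
have := @gdist_step z u; rewrite hz => /(_ isT) [z' ezz' /= hz'].
have sz' : closer u v z'.
  have := gdist_edge_parity z huv; have := gdist_edge_parity z' huv.
  have := gdist_edge_le v ezz'; move: sz; rewrite /closer; lia.
apply: connect_trans (connect1 _) (IH z' hz' sz').
by rewrite /cut_rel ezz' (mem_theta_of huv ezz') sz sz'.
Qed.

Lemma connect_cut_theta u v w y : e u v ->
  connect (cut_rel (theta_of e [set u; v])) w y = (closer u v w == closer u v y).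
Proof.
move=> huv; apply/idP/idP.
  have cl : closed (cut_rel (theta_of e [set u; v]))
      [pred z | closer u v z == closer u v w].
    move=> a b /andP [eab]; rewrite (mem_theta_of huv eab) negbK => /eqP E.
    by rewrite !inE E.
  by move=> /(closed_connect cl); rewrite !inE eqxx eq_sym => <-.
have CS := sym_connect_sym (cut_rel_sym (theta_of e [set u; v])).
have to_v z : ~~ closer u v z -> connect (cut_rel (theta_of e [set u; v])) z v.
  have hvu : e v u by rewrite Hsym.
  by rewrite -(closer_swap z huv) setUC; apply: closer_connect_cut hvu.
case sw: (closer u v w); case sy: (closer u v y) => // _.
  by apply: connect_trans (closer_connect_cut huv sw) _; rewrite CS closer_connect_cut.
apply: connect_trans (to_v w _) _; first by rewrite sw.
by rewrite CS to_v ?sy.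
Qed.

Lemma comp_theta u v x : e u v ->
  Defs.comp e (theta_of e [set u; v]) x = [set y | closer u v y == closer u v x].
Proof. by move=> huv; apply/setP => y; rewrite !inE eq_sym -connect_cut_theta. Qed.

Lemma opp4_sym : symmetric (opp4 e).
Proof.
suff opp4C E F : opp4 e E F -> opp4 e F E by move=> E F; apply/idP/idP; apply: opp4C.
move=> /existsP [a /existsP [b /existsP [x /existsP [y H]]]].
move: H => /and4P [hab hby hyx /and5P [hxa nay nbx /eqP -> /eqP ->]].
by apply: opp4_square; rewrite 1?Hsym // eq_sym.
Qed.

Lemma theta_of_connect E F : connect (opp4 e) E F -> theta_of e E = theta_of e F.
Proof.
move=> hEF; apply/setP => G; rewrite !inE.
by rewrite (same_connect (sym_connect_sym opp4_sym) hEF).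
Qed.

Lemma theta_of_mem E F : F \in theta_of e E -> theta_of e E = theta_of e F.
Proof. by rewrite inE => /andP [_ /theta_of_connect]. Qed.

Lemma closer_sub u v a b w : e u v -> e a b ->
  closer u v a -> ~~ closer u v b -> closer u v w -> closer a b w.
Proof.
move=> huv eab sa sb sw.
have : [set a; b] \in theta_of e [set u; v] by rewrite mem_theta_of // sa (negbTE sb).
move=> /theta_of_mem theta_ab.
have := connect_cut_theta a w huv.
rewrite theta_ab connect_cut_theta // sa sw.
by case: (closer_edge eab) => -> _.
Qed.

Definition convex (A : {set T}) :=
  forall x y z, x \in A -> y \in A -> z \in interval e x y -> z \in A.

Lemma convexI A B : convex A -> convex B -> convex (A :&: B).
Proof.
move=> cA cB x y z /setIP [xA xB] /setIP [yA yB] hz.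
by rewrite inE (cA x y z) // (cB x y z).
Qed.

Lemma closer_convex_in u v x y z : e u v ->
  closer u v x -> closer u v y -> d x z + d z y = d x y -> closer u v z.
Proof.
move=> huv sx sy; move hz : (d z y) => n; elim: n z hz => [|n IH] z hz hxzy.
  by rewrite (gdist0_eq hz).
have := @gdist_step z y; rewrite hz => /(_ isT) [z' ezz' /= hz'].
have t1 := gdist_triangle x z' y; have t2 := gdist_triangle x z z'.
rewrite (edge_gdist1 ezz') in t2.
have hxz' : d x z' = (d x z).+1 by clear -t1 t2 hxzy hz hz'; lia.
have sz' : closer u v z' by apply: (IH _ hz'); clear -t1 t2 hxzy hz hz'; lia.
apply/negPn/negP => sz.
have ez'z : e z' z by rewrite Hsym.
have := closer_sub huv ez'z sz' sz sx.
by rewrite /closer hxz' ltnNge leqnSn.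
Qed.

Lemma closer_convex u v c : e u v -> convex [set w | closer u v w == c].
Proof.
move=> huv; have hvu : e v u by rewrite Hsym.
case: c => x y z; rewrite !inE ?eqb_id ?eqbF_neg => sx sy /eqP hz.
  exact: closer_convex_in huv sx sy hz.
by move: sx sy; rewrite -!(closer_swap _ huv) => sx sy; apply: closer_convex_in hvu sx sy hz.
Qed.

Lemma convex_gated A a : convex A -> a \in A -> gated e A.
Proof.
move=> cA aA v.
have [g gA gmin] := @arg_minnP T a (mem A) (d v) aA.
exists g => // x xA.
have [m [m1 m2 m3]] := median_exists v g x.
have mA : m \in A by apply: (cA g x m) => //; rewrite inE m2.
have /gdist0_eq Emg : d m g = 0 by have := gmin m mA; clear -m1; lia.
subst m; rewrite inE addnC (gdistC g x) (gdistC v g) m3.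
by rewrite gdistC.
Qed.

Lemma theta_classP C : theta_class e C -> exists u v, e u v /\ C = theta_of e [set u; v].
Proof.
case/existsP => E /andP [/existsP [u /existsP [v /andP [huv /eqP ->]]] /eqP ->].
by exists u, v.
Qed.

Lemma halfspace_avoiding u v H z : e u v ->
  H \in halfspaces e (theta_of e [set u; v]) ->
  (forall H', H' \in halfspaces e (theta_of e [set u; v]) -> H' != H -> z \in H') ->
  H = [set w | closer u v w != closer u v z].
Proof.
move=> huv /imsetP [x _ ->] Havoid.
suff: closer u v x != closer u v z.
  rewrite comp_theta // => hxz; apply/setP => w; rewrite !inE.
  by move: hxz; case: (closer u v w); case: (closer u v x); case: (closer u v z).
have [x' hx'] : exists x', closer u v x' != closer u v x.
  have [su sv] := closer_edge huv.
  by case: (closer u v x); [exists v | exists u]; rewrite ?su ?(negbTE sv).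
have : z \in Defs.comp e (theta_of e [set u; v]) x'.
  apply: Havoid; first exact: imset_f.
  apply: contraNneq hx' => /setP /(_ x'); rewrite !comp_theta // !inE eqxx.
  by move=> <-.
by rewrite comp_theta // inE => /eqP ->; rewrite eq_sym.
Qed.

End MedianGraph.

Lemma large_setE (T : finType) (Hm : {set {set T}} -> {set T}) Ls k :
  large_set Hm Ls k = ~: \bigcup_(j < k) Hm (nth set0 Ls j).
Proof.
elim: k => [|k IH] /=; first by rewrite big_ord0 setC0.
by rewrite IH big_ord_recr /= setCU setDE.
Qed.

Lemma sliceE (T : finType) (Hm : {set {set T}} -> {set T}) Ls i :
  slice Hm Ls i = Hm (nth set0 Ls i) :\: \bigcup_(j < i) Hm (nth set0 Ls j).
Proof. by rewrite /slice /= setDDr setDv set0U setIC large_setE setDE. Qed.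

Section Slices.
Variables (T : finType) (e : rel T) (Hm : {set {set T}} -> {set T}).
Variables (v0 : T) (Ls : seq {set {set T}}).
Hypotheses (Hsym : symmetric e) (Hirr : irreflexive e) (Hconn : connected_graph e).
Hypothesis Hmed : median_graph e.
Hypothesis HLs_uniq : uniq Ls.
Hypothesis Hminority : forall C, C \in Ls -> exists u v,
  [/\ e u v, C = theta_of e [set u; v] & Hm C = [set w | closer e u v w != closer e u v v0]].

Lemma minority_convex C : C \in Ls -> convex e (Hm C) /\ convex e (~: Hm C).
Proof.
move=> /Hminority [u [v [huv _ ->]]].
have -> : [set w | closer e u v w != closer e u v v0] =
          [set w | closer e u v w == ~~ closer e u v v0].
  by apply/setP => w; rewrite !inE; case: (closer e u v w); case: (closer e u v v0).
split; first exact: closer_convex.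
have -> : ~: [set w | closer e u v w == ~~ closer e u v v0] =
          [set w | closer e u v w == closer e u v v0].
  by apply/setP => w; rewrite !inE; case: (closer e u v w); case: (closer e u v v0).
exact: closer_convex.
Qed.

Lemma minority_theta C F : C \in Ls -> F \in C -> C = theta_of e F.
Proof. by move=> /Hminority [u [v [_ -> _]]] /(theta_of_mem Hsym). Qed.

Lemma mem_minority C y : C \in Ls -> e v0 y -> ([set v0; y] \in C) = (y \in Hm C).
Proof.
by move=> /Hminority [u [v [huv -> ->]]] ey; rewrite mem_theta_of // inE eq_sym.
Qed.

Lemma large_set_convex k : k <= size Ls -> convex e (large_set Hm Ls k).
Proof.
elim: k => [_ x y z|k IH hk] /=; first by rewrite !inE.
rewrite setDE; apply: convexI; first exact: IH (ltnW hk).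
exact: (minority_convex (mem_nth set0 hk)).2.
Qed.

Lemma slice_convex i : i < size Ls -> convex e (slice Hm Ls i).
Proof.
move=> hi; rewrite /slice /= setDDr setDv set0U.
exact: convexI (large_set_convex (ltnW hi)) (minority_convex (mem_nth set0 hi)).1.
Qed.

Lemma mem_slice i y : i < size Ls -> e v0 y -> [set v0; y] \in nth set0 Ls i ->
  y \in slice Hm Ls i.
Proof.
move=> hi ey hyi; rewrite sliceE inE -mem_minority ?mem_nth // hyi andbT.
apply/bigcupP => -[j _]; have hj := ltn_trans (ltn_ord j) hi.
rewrite -mem_minority ?mem_nth // => hyj.
have : nth set0 Ls j == nth set0 Ls i.
  by rewrite (minority_theta (mem_nth set0 hj) hyj) -(minority_theta (mem_nth set0 hi) hyi).
by rewrite nth_uniq // => /eqP ji; move: (ltn_ord j); rewrite ji ltnn.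
Qed.

End Slices.

Unset Implicit Arguments.

Theorem mainTheorem8
  (T : finType) (e : rel T) (omega : T -> nat)
  (Hm : {set {set T}} -> {set T})
  (v0 umax : T) (Ls : seq {set {set T}})
  (Hsimple : simple_graph e) (Hconn : connected_graph e) (Hmed : median_graph e)
  (Hn : 3 <= #|T|)
  (HHm : forall C, theta_class e C ->
     Hm C \in halfspaces e C /\ forall H, H \in halfspaces e C -> #|Hm C| <= #|H|)
  (Hsmall : forall C, theta_class e C ->
     Rlt (INR #|Hm C|) (Rdiv (INR #|T|) (Rmult (INR 2) (ln (INR #|T|)))))
  (Hv0 : forall C, theta_class e C ->
     forall H, H \in halfspaces e C -> H != Hm C -> v0 \in H)
  (Humax : forall u, gdist e v0 u + omega u <= gdist e v0 umax + omega umax)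
  (Hv0_notmax : gdist e v0 v0 + omega v0 < gdist e v0 umax + omega umax)
  (Hneq : umax != v0)
  (HLs_uniq : uniq Ls)
  (HLs : forall C, (C \in Ls) = ladder e v0 umax C) :
  forall i, i < size Ls ->
    slice Hm Ls i = Hm (nth set0 Ls i) :\: \bigcup_(j < i) Hm (nth set0 Ls j)
    /\ gated e (slice Hm Ls i).
Proof.
have [Hsym Hirr] := Hsimple.
have Hminority C : C \in Ls -> exists u v, [/\ e u v, C = theta_of e [set u; v]
    & Hm C = [set w | closer e u v w != closer e u v v0]].
  rewrite HLs => /and3P [tC _ _]; have [u [v [huv EC]]] := theta_classP tC.
  exists u, v; split => //; have [HmC _] := HHm C tC.
  by apply: (halfspace_avoiding Hsym Hirr Hconn Hmed huv); rewrite -EC //; apply: Hv0.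
move=> i hi; split; first exact: sliceE.
have [y ey hy] : exists2 y, e v0 y & [set v0; y] \in nth set0 Ls i.
  by move: (mem_nth set0 hi); rewrite HLs => /and3P [_ _ /existsP [y /andP []]]; exists y.
apply: (convex_gated Hsym Hconn Hmed (slice_convex Hsym Hirr Hconn Hmed Hminority hi)).
exact: (mem_slice Hsym Hirr Hconn Hmed HLs_uniq Hminority hi ey hy).
Qed.
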